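(* Let $G$ be a Borel groupoid with a Borel Haar system $\{\lambda^u\}_{u\in G^{(0)}}$. Let $\{Y_i\}_{i=1}^\infty$ be a countable cover of $G^{(0)}$ by invariant Borel subsets such that each reduction $G|_{Y_i}$ is Borel amenable. Then $G$ is Borel amenable.
   Context: All Borel spaces are analytic. A Borel Haar system is a family of measures $\lambda^u$ on $G^u=r^{-1}(u)$ with $u\mapsto\int f\,d\lambda^u$ Borel for nonnegative Borel $f$ and $\gamma\cdot\lambda^{s(\gamma)}=\lambda^{r(\gamma)}$. $Y\subset G^{(0)}$ is invariant if $s(\gamma)\in Y$ iff $r(\gamma)\in Y$; $G|_Y=\{\gamma: r(\gamma),s(\gamma)\in Y\}$. A Borel groupoid $H$ is Borel amenable if there is a sequence of Borel systems $\{m_n^u\}_{u\in H^{(0)}}$ of probability measures, $m_n^u$ supported on $H^u$, $u\mapsto\int f\,dm_n^u$ Borel for nonnegative Borel $f$, with $\|\gamma\cdot m_n^{s(\gamma)}-m_n^{r(\gamma)}\|_1\to0$ for all $\gamma\in H$. *)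

From HB Require Import structures.
From mathcomp Require Import all_boot all_order all_algebra.
From mathcomp Require Import all_classical all_reals all_analysis measurable_realfun.

Set Implicit Arguments.
Unset Strict Implicit.
Unset Printing Implicit Defensive.

Import Order.TTheory GRing.Theory Num.Theory.
Local Open Scope classical_set_scope.
Local Open Scope ring_scope.

(* The unit space G^(0) is represented by the type X, embedded in G by [unit].
   [mul g h] is the product gh, only meaningful when s g = r h. *)
Record groupoid (X G : Type) := Groupoid {
  g_r : G -> X;
  g_s : G -> X;
  g_unit : X -> G;
  g_inv : G -> G;
  g_mul : G -> G -> G }.

Definition is_groupoid (X G : Type) (Gr : groupoid X G) : Prop :=
  let r := g_r Gr in let s := g_s Gr in let e := g_unit Gr in
  let i := g_inv Gr in let m := g_mul Gr in
  [/\ (forall u, r (e u) = u /\ s (e u) = u),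
      (forall g h, s g = r h -> r (m g h) = r g /\ s (m g h) = s h),
      (forall g h k, s g = r h -> s h = r k -> m (m g h) k = m g (m h k)),
      (forall g, m (e (r g)) g = g /\ m g (e (s g)) = g) &
      (forall g, [/\ r (i g) = s g, s (i g) = r g,
                    m g (i g) = e (r g) & m (i g) g = e (s g)])].

Definition composable (X G : Type) (Gr : groupoid X G) : set (G * G) :=
  [set p | g_s Gr p.1 = g_r Gr p.2].

(* Borel groupoid: all structure maps Borel; G^(2) is a Borel subset of G x G
   and points of the unit space are Borel (both automatic for analytic
   Borel spaces). *)
Definition borel_groupoid (d1 d2 : measure_display)
  (X : measurableType d1) (G : measurableType d2) (Gr : groupoid X G) : Prop :=
  [/\ is_groupoid Gr,
      [/\ measurable_fun setT (g_r Gr), measurable_fun setT (g_s Gr),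
          measurable_fun setT (g_unit Gr) & measurable_fun setT (g_inv Gr)],
      measurable (composable Gr),
      measurable_fun (composable Gr) (fun p : G * G => g_mul Gr p.1 p.2) &
      (forall u : X, measurable [set u])].

Definition fiber (X G : Type) (Gr : groupoid X G) (u : X) : set G :=
  [set g | g_r Gr g = u].

Definition translate (R : realType) (X G : Type) (Gr : groupoid X G)
  (g : G) (mu : set G -> \bar R) : set G -> \bar R :=
  fun A => mu (fiber Gr (g_s Gr g) `&` (g_mul Gr g @^-1` A)).

Definition haar_system (R : realType) (d1 d2 : measure_display)
  (X : measurableType d1) (G : measurableType d2) (Gr : groupoid X G)
  (lam : X -> {measure set G -> \bar R}) : Prop :=
  [/\ (forall u, lam u (~` fiber Gr u) = 0%E),
      (forall f : G -> \bar R, measurable_fun setT f -> (forall x, (0 <= f x)%E) ->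
         measurable_fun setT (fun u => (\int[lam u]_x f x)%E)) &
      (forall g A, measurable A ->
         translate Gr g (lam (g_s Gr g)) A = lam (g_r Gr g) A)].

Definition invariant_set (X G : Type) (Gr : groupoid X G) (Y : set X) : Prop :=
  forall g, Y (g_s Gr g) <-> Y (g_r Gr g).

Definition reduction (X G : Type) (Gr : groupoid X G) (Y : set X) : set G :=
  [set g | Y (g_r Gr g) /\ Y (g_s Gr g)].

(* Total variation norm ||mu - nu||_1 = |mu - nu|(G)
   = sup_A ((mu - nu)(A) - (mu - nu)(G \ A)) (A Borel). *)
Definition tv_norm (R : realType) (d : measure_display) (G : measurableType d)
  (mu nu : set G -> \bar R) : \bar R :=
  ereal_sup [set ((mu A - nu A) - (mu (~` A) - nu (~` A)))%E
            | A in [set A : set G | measurable A]].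

(* Borel amenability of the reduction G|_Y (for Y invariant Borel): the
   Borel structure on G|_Y and on Y is the trace Borel structure. A system
   {m_n^u}_{u in Y} is given by values of m n u for u in Y. *)
Definition borel_amenable_on (R : realType) (d1 d2 : measure_display)
  (X : measurableType d1) (G : measurableType d2) (Gr : groupoid X G)
  (Y : set X) : Prop :=
  exists m : nat -> X -> {measure set G -> \bar R},
    [/\ (forall n u, Y u -> m n u setT = 1%E),
        (forall n u, Y u -> m n u (~` fiber Gr u) = 0%E),
        (forall n (f : G -> \bar R), measurable_fun (reduction Gr Y) f ->
           (forall x, reduction Gr Y x -> (0 <= f x)%E) ->
           measurable_fun Y (fun u => (\int[m n u]_(x in reduction Gr Y) f x)%E)) &
        (forall g, reduction Gr Y g ->
           (fun n => tv_norm (translate Gr g (m n (g_s Gr g))) (m n (g_r Gr g)))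
             @ \oo --> 0%E)].

Definition borel_amenable (R : realType) (d1 d2 : measure_display)
  (X : measurableType d1) (G : measurableType d2) (Gr : groupoid X G) : Prop :=
  borel_amenable_on R Gr setT.

From HB Require Import structures.
From mathcomp Require Import all_boot all_order all_algebra.
From mathcomp Require Import all_classical all_reals all_analysis measurable_realfun.
Import Order.TTheory GRing.Theory Num.Theory.
Local Open Scope classical_set_scope.
Local Open Scope ring_scope.

Set Implicit Arguments.
Unset Strict Implicit.

(* Send each unit u to the first index i(u) with u in Y_i and use the i(u)-th
   approximate invariant system at u.  The level sets of i are the Borel sets
   Y_i \ (Y_0 u ... u Y_(i-1)), so the glued system is Borel piece by piece;
   invariance of the Y_i gives i(s g) = i(r g), so along an arrow g both ends
   use the same system, in which g is an arrow of the reduction G|_(Y_i(r g)). *)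

Lemma ge0_integral_conull (R : realType) d (T : measurableType d)
    (mu : {measure set T -> \bar R}) (D : set T) (f : T -> \bar R) :
  measurable D -> measurable_fun setT f -> (forall x, 0 <= f x)%E ->
  mu (~` D) = 0%E -> (\int[mu]_x f x = \int[mu]_(x in D) f x)%E.
Proof.
move=> mD mf f0 muDC0; have mDC : measurable (~` D) := measurableC mD.
rewrite -(setUv D) ge0_integral_setU ?setUv //; last by rewrite /disj_set setICr.
by rewrite [X in (_ + X)%E]null_set_integral ?adde0 //; exact: measurable_funS mf.
Qed.

Section cover_index.
Variables (T : Type) (Y : nat -> set T).
Hypothesis coverY : \bigcup_i Y i = setT.

Lemma cover_exists (u : T) : exists i, `[< Y i u >].
Proof.
have : [set: T] u by [].
by rewrite -coverY => -[i _ Yiu]; exists i; apply/asboolP.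
Qed.

Definition cover_index (u : T) : nat := ex_minn (cover_exists u).

Lemma cover_index_mem u : Y (cover_index u) u.
Proof. by rewrite /cover_index; case: ex_minnP => i /asboolP. Qed.

Lemma cover_index_min u i : Y i u -> (cover_index u <= i)%N.
Proof.
by rewrite /cover_index; case: ex_minnP => j _ minj Yiu; apply/minj/asboolP.
Qed.

Lemma eq_cover_index u v :
  (forall i, Y i u <-> Y i v) -> cover_index u = cover_index v.
Proof.
move=> Yuv; apply/eqP; rewrite eqn_leq.
by rewrite !cover_index_min ?cover_index_mem //; apply/Yuv; exact: cover_index_mem.
Qed.

Lemma cover_index_preimage i :
  cover_index @^-1` [set i] = Y i `\` \bigcup_(j in `I_i) Y j.
Proof.
apply/seteqP; split => u /=.
- move=> <-; split; first exact: cover_index_mem.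
  by move=> [j /= ltji /cover_index_min]; rewrite leqNgt ltji.
- move=> [Yiu notYu]; apply/eqP; rewrite eqn_leq cover_index_min //= leqNgt.
  by apply/negP => lt; apply: notYu; exists (cover_index u) => //; exact: cover_index_mem.
Qed.

End cover_index.

Lemma measurable_cover_index_preimage d (T : measurableType d)
    (Y : nat -> set T) (coverY : \bigcup_i Y i = setT) i :
  (forall j, measurable (Y j)) -> measurable (cover_index coverY @^-1` [set i]).
Proof.
move=> mY; rewrite cover_index_preimage.
by apply: measurableD => //; exact: bigcup_measurable.
Qed.

Lemma measurable_fun_cover_index d d' (T : measurableType d)
    (T' : measurableType d') (Y : nat -> set T)
    (coverY : \bigcup_i Y i = setT) (h : T -> T') :
  (forall j, measurable (Y j)) ->
  (forall i, measurable_fun (cover_index coverY @^-1` [set i]) h) ->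
  measurable_fun setT h.
Proof.
move=> mY mh.
have -> : [set: T] = \bigcup_i cover_index coverY @^-1` [set i].
  by apply/seteqP; split => // u _; exists (cover_index coverY u).
by apply/measurable_fun_bigcup => // i; exact: measurable_cover_index_preimage.
Qed.

Section reduction.
Variables (d1 d2 : measure_display) (X : measurableType d1) (G : measurableType d2).
Variable Gr : groupoid X G.

Lemma reduction_setT : reduction Gr setT = setT.
Proof. by apply/seteqP; split. Qed.

Lemma fiber_sub_reduction (Y : set X) u :
  invariant_set Gr Y -> Y u -> fiber Gr u `<=` reduction Gr Y.
Proof.
by move=> invY Yu g rgu; rewrite /reduction /= rgu; split => //; apply/invY; rewrite rgu.
Qed.

Hypothesis mr : measurable_fun setT (g_r Gr).

Lemma measurable_fiber u : measurable [set u] -> measurable (fiber Gr u).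
Proof. by move=> mu; have := mr measurableT mu; rewrite setTI. Qed.

Hypothesis ms : measurable_fun setT (g_s Gr).

Lemma measurable_reduction (Y : set X) : measurable Y -> measurable (reduction Gr Y).
Proof.
move=> mY; apply: measurableI.
- by have := mr measurableT mY; rewrite setTI.
- by have := ms measurableT mY; rewrite setTI.
Qed.

End reduction.

Definition amenable_system (R : realType) (d1 d2 : measure_display)
    (X : measurableType d1) (G : measurableType d2) (Gr : groupoid X G)
    (Y : set X) (m : nat -> X -> {measure set G -> \bar R}) : Prop :=
  [/\ (forall n u, Y u -> m n u setT = 1%E),
      (forall n u, Y u -> m n u (~` fiber Gr u) = 0%E),
      (forall n (f : G -> \bar R), measurable_fun (reduction Gr Y) f ->
         (forall x, reduction Gr Y x -> (0 <= f x)%E) ->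
         measurable_fun Y (fun u => (\int[m n u]_(x in reduction Gr Y) f x)%E)) &
      (forall g, reduction Gr Y g ->
         (fun n => tv_norm (translate Gr g (m n (g_s Gr g))) (m n (g_r Gr g)))
           @ \oo --> 0%E)].

Lemma borel_amenable_onE (R : realType) (d1 d2 : measure_display)
    (X : measurableType d1) (G : measurableType d2) (Gr : groupoid X G) (Y : set X) :
  borel_amenable_on R Gr Y <->
  exists m : nat -> X -> {measure set G -> \bar R}, amenable_system Gr Y m.
Proof. by []. Qed.

Section glue.
Variables (R : realType) (d1 d2 : measure_display).
Variables (X : measurableType d1) (G : measurableType d2) (Gr : groupoid X G).
Hypotheses (mr : measurable_fun setT (g_r Gr)) (ms : measurable_fun setT (g_s Gr)).
Hypothesis measurable_points : forall u : X, measurable [set u].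
Variable Y : nat -> set X.
Hypotheses (mY : forall i, measurable (Y i)) (invY : forall i, invariant_set Gr (Y i)).
Hypothesis coverY : \bigcup_i Y i = setT.
Variable m : nat -> nat -> X -> {measure set G -> \bar R}.
Hypothesis m_amenable : forall i, amenable_system Gr (Y i) (m i).

Local Notation idx := (cover_index coverY).

Definition glued_system n u := m (idx u) n u.

Lemma glued_system_integral n u f :
  measurable_fun setT f -> (forall x, 0 <= f x)%E ->
  (\int[glued_system n u]_x f x =
   \int[m (idx u) n u]_(x in reduction Gr (Y (idx u))) f x)%E.
Proof.
move=> mf f0; have [_ m_support _ _] := m_amenable (idx u).
apply: ge0_integral_conull => //; first exact: measurable_reduction.
have Yu : Y (idx u) u := cover_index_mem coverY u.
apply: (subset_measure0 _ _ _ (m_support n u Yu)).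
- by apply/measurableC/measurable_reduction.
- by apply/measurableC/measurable_fiber.
- by apply: subsetC; exact: fiber_sub_reduction.
Qed.

Lemma measurable_glued_integral n (f : G -> \bar R) :
  measurable_fun setT f -> (forall x, 0 <= f x)%E ->
  measurable_fun setT (fun u => \int[glued_system n u]_x f x)%E.
Proof.
move=> mf f0; apply: (measurable_fun_cover_index (coverY := coverY)) => // i.
have idxY : idx @^-1` [set i] `<=` Y i.
  by move=> u /= <-; exact: cover_index_mem.
have [_ _ m_measurable _] := m_amenable i.
have mfY := m_measurable n f (measurable_funS measurableT (subsetT _) mf)
  (fun x _ => f0 x).
apply: eq_measurable_fun (measurable_funS (mY i) idxY mfY) => u /[!inE] /= idxu.
by rewrite glued_system_integral // idxu.
Qed.

Lemma glued_system_invariance g :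
  (fun n => tv_norm (translate Gr g (glued_system n (g_s Gr g)))
                    (glued_system n (g_r Gr g))) @ \oo --> 0%E.
Proof.
have idx_sr : idx (g_s Gr g) = idx (g_r Gr g).
  by apply: eq_cover_index => i; exact: invY.
have [_ _ _ m_invariance] := m_amenable (idx (g_r Gr g)).
rewrite /glued_system idx_sr; apply: m_invariance; split.
- exact: cover_index_mem.
- by rewrite -idx_sr; exact: cover_index_mem.
Qed.

Lemma amenable_glued_system : amenable_system Gr setT glued_system.
Proof.
split => [n u _|n u _|n f|g _].
- have [m_mass _ _ _] := m_amenable (idx u).
  exact: m_mass (cover_index_mem coverY u).
- have [_ m_support _ _] := m_amenable (idx u).
  exact: m_support (cover_index_mem coverY u).
- rewrite reduction_setT => mf f0.
  exact: measurable_glued_integral mf (fun x => f0 x I).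
- exact: glued_system_invariance.
Qed.

End glue.

Theorem lemma3p3 (R : realType) (d1 d2 : measure_display)
  (X : measurableType d1) (G : measurableType d2) (Gr : groupoid X G)
  (lam : X -> {measure set G -> \bar R})
  (Y : nat -> set X) :
  borel_groupoid Gr ->
  haar_system Gr lam ->
  (forall i, measurable (Y i) /\ invariant_set Gr (Y i)) ->
  \bigcup_i Y i = setT ->
  (forall i, borel_amenable_on R Gr (Y i)) ->
  borel_amenable R Gr.
Proof.
move=> [_ [mr ms _ _] _ _ measurable_points] _ Y_inv coverY Y_amenable.
have [m m_amenable] := choice Y_amenable.
apply/borel_amenable_onE; exists (glued_system coverY m).
apply: amenable_glued_system => // i; [exact: (Y_inv i).1 | exact: (Y_inv i).2].
Qed.
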